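(* Let $\Lambda,\alpha$ be positive integers with $\alpha\in[\Lambda-1]$ and let $r\in[\Lambda-\alpha]$. For the MADC model with combinatorial topology (CT) having $\Lambda$ mapper nodes, $K=\binom{\Lambda}{\alpha}$ reducer nodes and computation load $r$, the communication load $$L(r,\alpha)=\frac{\binom{\Lambda-\alpha}{r}}{\binom{\Lambda}{r}\left(\binom{r+\alpha}{r}-1\right)}$$ is achievable. (The array $D_{\Lambda,r,\alpha}$, whose rows are the batches $B_T$ and columns the reducer nodes $U$, with $d_{T,U}=*$ exactly when reducer $U$ has access to $B_T$, is a $\binom{r+\alpha}{r}$-regular $\left(\binom{\Lambda}{\alpha},\binom{\Lambda}{r},\binom{\Lambda}{\alpha+r}\right)$ MRA representing this model.)
   Context: Notation: $[0,n)=\{0,1,\dots,n-1\}$, $[n]=\{1,\dots,n\}$. MADC (multi-access distributed computing) model: There are $\Lambda$ mapper nodes indexed by $[0,\Lambda)$ and $K$ reducer nodes. There are $N$ input files $w_0,\dots,w_{N-1}\in\mathbb{F}_{2^d}$ and $Q$ output functions $\phi_q:\mathbb{F}_{2^d}^N\to\mathbb{F}_{2^b}$, $q\in[0,Q)$, of the form $\phi_q(w_0,\dots,w_{N-1})=h_q(v_{q,0},\dots,v_{q,N-1})$, where $v_{q,n}=g_{q,n}(w_n)\in\mathbb{F}_{2^t}$ is called an intermediate value (IV). Each reducer node $k$ is assigned a set $\mathcal W_k\subseteq[0,Q)$ of $Q/K$ output functions, these sets being pairwise disjoint. The files are partitioned into $F$ disjoint batches of $N/F$ files each. Map phase: each mapper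 node $\lambda$ stores a set $M_\lambda$ of batches and computes all IVs $v_{q,n}$, $q\in[0,Q)$, for all files $w_n$ in its stored batches. Each reducer node is connected to a set of mapper nodes and has access to every batch stored at any mapper node it is connected to, together with all IVs computed from those batches. Shuffle phase: each reducer node $k$ broadcasts to all other reducer nodes, error-free, a message $\mathbf X_k$ of $l_k$ bits that is a function of the IVs it has access to. Reduce phase: each reducer node $k$ must recover all IVs $v_{q,n}$ with $q\in\mathcal W_k$, $n\in[0,N)$, from the received messages and the IVs it has access to. The computation load is $r=\sum_{\lambda}|M_\lambda|/F$ and the communication load is $L=\sum_{k}l_k/(QNt)$. A communication load $L$ is achievable for a given model if there exists a shuffle/reduce scheme satisfying all decoding requirements that attains $L$ (for a suitable choice of the number of files per batch, the number of functions per reducer, and the IV length $t$). Combinatorial topology (CT): the files are split into $F=\binom{\Lambda}{r}$ batches $B_T$, one for each $T\subset[0,\Lambda)$ with $|T|=r$; mapper node $\lambda$ stores exactly the batches $B_T$ with $\lambda\in T$; there are $K=\binom{\Lambda}{\alpha}$ reducer nodes, one for each $\alpha$-subset $U\subset[0,\Lambda)$, and reducer node $U$ is connected exactly to the mapper nodes in $U$ (so it has access to $B_T$ iff $T\cap U\neq\emptyset$). $D_{\Lambda,r,\alpha}$: order the $(\alpha+r)$-subsets of $[0,\Lambda)$ lexicographically and let $y_{\alpha+r}(T')$ be the position of $T'$ minus 1; $D_{\Lambda,r,\alpha}$ has rows indexed by $r$-subsets $T$ and columns by $\alpha$-subsets $U$ of $[0,\Lambda)$, with $d_{T,U}=*$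 if $T\cap U\ne\emptyset$ and $d_{T,U}=y_{\alpha+r}(T\cup U)$ otherwise. A $g$-regular $(K,F,S)$ MRA is an $F\times K$ array with entries $*$ or integers in $[0,S)$, each integer occurring exactly $g\ge2$ times, such that two equal integer entries lie in distinct rows $f_1,f_2$ and distinct columns $k_1,k_2$ with $p_{f_1,k_2}=p_{f_2,k_1}=*$. *)

From mathcomp Require Import all_boot all_order all_algebra.
Set Implicit Arguments. Unset Strict Implicit. Unset Printing Implicit Defensive.
Import GRing.Theory Num.Theory.

(* Mapper nodes: 'I_Lam.
   Files: pairs (T, i) with i : 'I_eta  -- file i of batch B_T (eta files per batch),
          so N = C(Lam,r) * eta.
   Output functions: pairs (U, j) with j : 'I_zeta -- W_U = {(U,j) | j},
          so Q = C(Lam,alpha) * zeta, the W_U pairwise disjoint of size Q/K = zeta.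
   IVs v_{q,n} in F_{2^t}: represented as t-bit strings. *)

Definition ksubsets (Lam k : nat) := {A : {set 'I_Lam} | #|A| == k}.
Definition ctBatch (Lam r : nat) := ksubsets Lam r.
Definition ctReducer (Lam a : nat) := ksubsets Lam a.

Definition ctFile (Lam r eta : nat) := (ctBatch Lam r * 'I_eta)%type.
Definition ctFun (Lam a zeta : nat) := (ctReducer Lam a * 'I_zeta)%type.

Definition IVassign (Lam r a eta zeta t : nat) :=
  ctFun Lam a zeta -> ctFile Lam r eta -> t.-tuple bool.

(* Reducer U has access to batch B_T iff T meets U (connected to mappers in U). *)
Definition ct_access (Lam r a : nat) (U : ctReducer Lam a) (T : ctBatch Lam r) : bool :=
  ~~ [disjoint val U & val T].

Definition agree_on (Lam r a eta zeta t : nat) (U : ctReducer Lam a)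
  (v v' : IVassign Lam r a eta zeta t) : Prop :=
  forall (q : ctFun Lam a zeta) (n : ctFile Lam r eta),
    ct_access U n.1 -> v q n = v' q n.

Definition ct_achievable (Lam r a : nat) (load : rat) : Prop :=
  exists (eta zeta t : nat), [/\ 0 < eta, 0 < zeta, 0 < t &
    exists (l : ctReducer Lam a -> nat)
      (enc : forall U : ctReducer Lam a,
               IVassign Lam r a eta zeta t -> (l U).-tuple bool)
      (dec : forall U : ctReducer Lam a,
               (forall U' : ctReducer Lam a, (l U').-tuple bool) ->
               IVassign Lam r a eta zeta t ->
               'I_zeta -> ctFile Lam r eta -> t.-tuple bool),
      [/\ (forall U v v', agree_on U v v' -> enc U v = enc U v'),
          (forall U X v v', agree_on U v v' -> dec U X v = dec U X v'),
          (forall U v (j : 'I_zeta) (n : ctFile Lam r eta),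
              dec U (fun U' => enc U' v) v j n = v (U, j) n) &
          ((\sum_(U : ctReducer Lam a) l U)%:R
             / ((#|{: ctReducer Lam a}| * zeta) * (#|{: ctBatch Lam r}| * eta) * t)%:R
           = load)%R]].

From mathcomp Require Import all_boot all_algebra.
From Stdlib Require Import FunctionalExtensionality.
From mathcomp Require Import zify.
Set Implicit Arguments. Unset Strict Implicit. Unset Printing Implicit Defensive.
Import GRing.Theory Num.Theory.

(* An (a+r)-set S is split by the
   g = C(r+a, r) pairs (U, S \ U) with U an a-subset of S: reducer U lacks the
   IV v(U, S \ U), while every other member U' of S has access to it.  Cutting
   each IV into g - 1 one-bit pieces, one per other member U', and letting U'
   broadcast the XOR of the pieces it is responsible for, reducer U recovers
   its k-th missing piece from the broadcast of the k-th other member of S by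
   cancelling the pieces it knows.  Each reducer sends one bit per batch
   disjoint from it, which gives the load. *)

Lemma subset_setU_disjoint_eq (T : finType) (A B C : {set T}) :
  C \subset A :|: B -> [disjoint C & B] -> #|A| <= #|C| -> C = A.
Proof.
move=> sCAB dCB leAC; apply/eqP; rewrite eqEcard leAC andbT.
apply/subsetP => x xC; move/subsetP/(_ x xC): sCAB.
by rewrite inE (disjointFr dCB xC) orbF.
Qed.

Section OtherMember.
Variables (T : eqType) (s : seq T) (x : T).
Hypotheses (s_uniq : uniq s) (x_in : x \in s).

Definition other_member k := nth x s (bump (index x s) k).

Lemma other_member_spec k : k < (size s).-1 ->
  [/\ other_member k \in s, other_member k != x
    & unbump (index x s) (index (other_member k) s) = k].
Proof.
move=> lt_k; have lt_x : index x s < size s by rewrite index_mem.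
have lt_bump : bump (index x s) k < size s.
  by move: lt_x lt_k; rewrite /bump; case: leqP => /=; lia.
have idx_other : index (other_member k) s = bump (index x s) k.
  exact: index_uniq.
split; first exact: mem_nth.
- apply/eqP => eq_x; have := neq_bump (index x s) k.
  by rewrite -idx_other eq_x eqxx.
- by rewrite idx_other bumpK.
Qed.

End OtherMember.

Lemma bin_addn_gt1 m n : 0 < m -> 0 < n -> 1 < 'C(m + n, m).
Proof.
move=> m_gt0 n_gt0; rewrite (leq_trans _ (leq_bin2l m (_ : m.+1 <= m + n))) ?binSn //.
by rewrite -addn1 leq_add2l.
Qed.

Section KSubsets.
Variable Lam : nat.
Local Notation I := 'I_Lam.

Lemma card_ksubsets_pred k (P : pred {set I}) :
  #|[set X : ksubsets Lam k | P (val X)]| = #|[set A : {set I} | P A & #|A| == k]|.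
Proof.
rewrite -(card_imset _ val_inj); apply: eq_card => A; rewrite inE.
apply/imsetP/andP => [[X]|[PA kA]].
  by rewrite inE => PX ->; split => //; exact: (valP X).
by exists (Sub A kA) => //; rewrite inE SubK.
Qed.

Lemma card_ksubsets k : #|{: ksubsets Lam k}| = 'C(Lam, k).
Proof.
rewrite -cardsT -[Lam in RHS]card_ord -card_draws.
rewrite (eq_card (B := [set X : ksubsets Lam k | predT (val X)])) => [|X].
  by rewrite card_ksubsets_pred; apply: eq_card => A; rewrite !inE.
by rewrite !inE.
Qed.

Lemma card_ksubsets_sub k (S : {set I}) :
  #|[set X : ksubsets Lam k | val X \subset S]| = 'C(#|S|, k).
Proof. by rewrite (@card_ksubsets_pred k (fun A => A \subset S)) cards_draws. Qed.

Lemma card_ksubsets_disjoint k (A : {set I}) :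
  #|[set X : ksubsets Lam k | [disjoint A & val X]]| = 'C(Lam - #|A|, k).
Proof.
rewrite (@card_ksubsets_pred k (fun B => [disjoint A & B])).
rewrite (eq_card (B := [set B : {set I} | B \subset ~: A & #|B| == k])).
  by rewrite cards_draws cardsCs setCK card_ord.
by move=> B; rewrite !inE disjoint_sym disjoints_subset.
Qed.

End KSubsets.

Section CombinatorialTopology.
Variables Lam a r : nat.
Local Notation I := 'I_Lam.
Local Notation Red := (ctReducer Lam a).
Local Notation Bat := (ctBatch Lam r).

Definition splits (S : {set I}) (U : Red) (T : Bat) :=
  [disjoint val U & val T] && (val U :|: val T == S).

Definition disjoint_batches (U : Red) := [set T : Bat | [disjoint val U & val T]].

Definition members (S : {set I}) := enum [set U : Red | val U \subset S].

Lemma card_disjoint_batches U : #|disjoint_batches U| = 'C(Lam - a, r).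
Proof. by rewrite card_ksubsets_disjoint (eqP (valP U)). Qed.

Lemma size_members (S : {set I}) : #|S| = a + r -> size (members S) = 'C(r + a, r).
Proof.
move=> cardS; rewrite -cardE card_ksubsets_sub cardS.
by rewrite -(bin_sub (leq_addr r a)) addKn addnC.
Qed.

Lemma splits_card (S : {set I}) U T : splits S U T -> #|S| = a + r.
Proof.
case/andP=> dUT /eqP <-.
by rewrite cardsU (disjoint_setI0 dUT) cards0 subn0 (eqP (valP U)) (eqP (valP T)).
Qed.

Lemma splits_batch (S : {set I}) U T : splits S U T -> val T = S :\: val U.
Proof.
case/andP=> dUT /eqP <-; apply/setP => x; rewrite !inE.
case xT: (x \in val T); last by rewrite orbF andNb.
by rewrite (disjointFl dUT xT).
Qed.

Lemma splits_exists (S : {set I}) (U : Red) :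
  #|S| = a + r -> val U \subset S -> exists T, splits S U T.
Proof.
move=> cardS sUS.
have cardT : #|S :\: val U| == r.
  by rewrite cardsD (setIidPr sUS) cardS (eqP (valP U)) addKn.
exists (Sub (S :\: val U) cardT : Bat); rewrite /splits SubK.
rewrite disjoint_sym disjoints_subset subsetDr /=.
by rewrite setDE setUIr setUCr setIT (setUidPr sUS).
Qed.

Lemma splits_access (S : {set I}) U T (X : Red) :
  splits S U T -> val X \subset S -> X != U -> ct_access X T.
Proof.
case/andP=> _ /eqP eqS sXS; apply: contraNN => dXT; apply/eqP/val_inj.
apply: subset_setU_disjoint_eq dXT _; first by rewrite eqS.
by rewrite (eqP (valP X)) (eqP (valP U)).
Qed.

Definition iv_len := 'C(r + a, r) - 1.

Local Notation IVs := (IVassign Lam r a 1 1 iv_len).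
Local Notation Messages := (forall U : Red, (#|disjoint_batches U|).-tuple bool).

Definition piece (w : IVs) (U : Red) (T : Bat) k := nth false (w (U, ord0) (T, ord0)) k.

(* The piece of v(X, S \ X) that the member U' of S is responsible for. *)
Definition slot (S : {set I}) (X U' : Red) :=
  unbump (index X (members S)) (index U' (members S)).

Definition coded_bit (U' : Red) (w : IVs) (S : {set I}) : bool :=
  \big[addb/false]_(p : Red * Bat | splits S p.1 p.2 && (p.1 != U'))
     piece w p.1 p.2 (slot S p.1 U').

Definition message (U : Red) (w : IVs) : (#|disjoint_batches U|).-tuple bool :=
  map_tuple (fun T => coded_bit U w (val U :|: val T))
    (enum_tuple (mem (disjoint_batches U))).

Definition restrict (U : Red) (w : IVs) : IVs :=
  fun q n => if ct_access U n.1 then w q n else nseq_tuple iv_len false.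

Definition received (X : Messages) (U : Red) (S : {set I}) :=
  nth false (X U) (find (splits S U) (enum (disjoint_batches U))).

Definition decoded_bit (U : Red) (X : Messages) (w : IVs) (T : Bat) k : bool :=
  let S := val U :|: val T in
  let U' := other_member (members S) U k in
  received X U' S (+)
  \big[addb/false]_(p : Red * Bat | splits S p.1 p.2 && (p.1 != U') && (p.1 != U))
     piece w p.1 p.2 (slot S p.1 U').

Definition encoder (U : Red) (v : IVs) := message U (restrict U v).

Definition decoder (U : Red) (X : Messages) (v : IVs) (j : 'I_1) (n : ctFile Lam r 1) :
    iv_len.-tuple bool :=
  let w := restrict U v in
  if ct_access U n.1 then w (U, j) n else [tuple decoded_bit U X w n.1 k | k < iv_len].

Lemma restrict_agree U (v v' : IVs) : agree_on U v v' -> restrict U v = restrict U v'.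
Proof.
move=> agree; apply: functional_extensionality => q.
apply: functional_extensionality => n.
by rewrite /restrict; case: ifP => // /agree ->.
Qed.

Lemma piece_restrict (S : {set I}) (U X : Red) Y (v : IVs) k :
  splits S X Y -> val U \subset S -> X != U ->
  piece (restrict U v) X Y k = piece v X Y k.
Proof.
by move=> sXY sUS neXU; rewrite /piece /restrict (splits_access sXY) // eq_sym.
Qed.

Lemma received_message (f : Red -> IVs) U (S : {set I}) T :
  splits S U T -> received (fun U => message U (f U)) U S = coded_bit U (f U) S.
Proof.
move=> sUT; rewrite /received.
have has_split : has (splits S U) (enum (disjoint_batches U)).
  by apply/hasP; exists T => //; rewrite mem_enum inE; case/andP: sUT.
rewrite (nth_map T) ?size_enum_tuple -?cardE; last first.
  by rewrite cardE -has_find.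
by have /andP[_ /eqP ->] := nth_find T has_split.
Qed.

Lemma coded_bit_split (S : {set I}) (U U' : Red) T (w : IVs) :
  splits S U T -> U != U' ->
  coded_bit U' w S = piece w U T (slot S U U') (+)
    \big[addb/false]_(p : Red * Bat | splits S p.1 p.2 && (p.1 != U') && (p.1 != U))
       piece w p.1 p.2 (slot S p.1 U').
Proof.
move=> sUT neUU'; rewrite /coded_bit (bigD1 (U, T)) ?sUT //=.
congr addb; apply: eq_bigl => -[X Y] /=.
case sXY: (splits S X Y) => //=; congr andb.
rewrite xpair_eqE; case: eqP => [eqXU | //]; subst X.
suff -> : Y = T by rewrite eqxx.
by apply: val_inj; rewrite (splits_batch sXY) (splits_batch sUT).
Qed.

Lemma decoded_bit_correct (U : Red) (T : Bat) (v : IVs) k :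
  [disjoint val U & val T] -> k < iv_len ->
  decoded_bit U (fun U' => encoder U' v) (restrict U v) T k = piece v U T k.
Proof.
move=> dUT lt_k; rewrite /decoded_bit /=.
set S := val U :|: val T.
have sUT : splits S U T by rewrite /splits dUT eqxx.
have cardS := splits_card sUT.
have U_in : U \in members S by rewrite mem_enum inE subsetUl.
have [|U'_in neU'U slotU] := other_member_spec (enum_uniq _) U_in (k := k).
  by rewrite size_members // -subn1.
set U' : Red := other_member _ _ _ in U'_in neU'U slotU *.
have {}slotU : slot S U U' = k by [].
have sU'S : val U' \subset S by move: U'_in; rewrite mem_enum inE.
have [T' sU'T'] := splits_exists cardS sU'S.
rewrite (received_message _ sU'T') (coded_bit_split _ sUT) 1?eq_sym //.
rewrite (piece_restrict _ _ sUT) //; last by rewrite eq_sym.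
rewrite slotU -addbA -[RHS]addbF; congr addb.
rewrite -big_split /=; apply: big1 => -[X Y] /= /andP[/andP[sXY neXU'] neXU].
by rewrite !(piece_restrict _ _ sXY) ?subsetUl ?addbb.
Qed.

Lemma decoder_correct (U : Red) (v : IVs) j (n : ctFile Lam r 1) :
  decoder U (fun U' => encoder U' v) v j n = v (U, j) n.
Proof.
case: n => T i; rewrite /decoder /=; case: ifP => [access | no_access].
  by rewrite /restrict /= access.
rewrite (ord1 i) (ord1 j); apply: eq_from_tnth => k.
rewrite tnth_mktuple decoded_bit_correct ?ltn_ord ?(negbFE no_access) //.
by rewrite /piece (tnth_nth false).
Qed.

End CombinatorialTopology.

Lemma ct_load (Lam a r : nat) : a <= Lam -> r <= Lam -> 1 < 'C(r + a, r) ->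
  ((\sum_(U : ctReducer Lam a) #|disjoint_batches r U|)%:R
     / ((#|{: ctReducer Lam a}| * 1) * (#|{: ctBatch Lam r}| * 1) * iv_len a r)%:R
   = 'C(Lam - a, r)%:R / ('C(Lam, r)%:R * ('C(r + a, r)%:R - 1)) :> rat)%R.
Proof.
move=> le_aL le_rL gt1_bin.
rewrite (eq_bigr (fun=> 'C(Lam - a, r))) => [|U _]; last exact: card_disjoint_batches.
rewrite sum_nat_const !card_ksubsets !muln1 /iv_len -mulnA.
rewrite !natrM natrB ?(ltnW gt1_bin) //.
by rewrite -mulf_div divff ?mul1r // pnatr_eq0 -lt0n bin_gt0.
Qed.

Theorem theorem4 (Lam a r : nat)
  (ha1 : 1 <= a) (ha2 : a <= Lam - 1) (hr1 : 1 <= r) (hr2 : r <= Lam - a) :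
  ct_achievable Lam r a
    (('C(Lam - a, r))%:R / (('C(Lam, r))%:R * (('C(r + a, r))%:R - 1)) : rat)%R.
Proof.
have gt1_bin := bin_addn_gt1 hr1 ha1.
exists 1, 1, (iv_len a r); split => //; first by rewrite subn_gt0.
exists (fun U => #|disjoint_batches r U|), (@encoder Lam a r), (@decoder Lam a r).
split.
- by move=> U v v' agree; rewrite /encoder (restrict_agree agree).
- by move=> U X v v' agree; rewrite /decoder (restrict_agree agree).
- exact: decoder_correct.
- by apply: ct_load => //; lia.
Qed.
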